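(* Let $G$ be a connected graph with infinitely many nodes, not necessarily locally finite. Suppose ${}^{*}G$ has a hypernode that is not in its principal galaxy $\Gamma_0$. Then there exist galaxies $\Gamma_i$, $i\in\mathbb Z$, of ${}^{*}G$, all different from $\Gamma_0$, such that for all integers $i<j$ the galaxy $\Gamma_i$ is closer to $\Gamma_0$ than is $\Gamma_j$. In other words, there is a two-way infinite sequence of galaxies totally ordered according to their closeness to $\Gamma_0$.
   Context: Conventions. $G=\{X,B\}$ is a graph whose branches are two-element subsets of $X$, and $d$ is the graph distance. Fix a free ultrafilter $\mathcal F$ on $\mathbb N$. Hypernodes and enlargement. Hypernodes are classes $[x_n]$ of node sequences, with two sequences identified when they agree on a set in $\mathcal F$. A standard hypernode is the class of a constant sequence. ${}^{*}G$ consists of the hypernodes and the hyperbranches $[\{x_n,y_n\}]$ with $\{n:\{x_n,y_n\}\in B\}\in\mathcal F$. Galaxies. Hypernodes $[x_n]$ and $[y_n]$ are limitedly distant if $\{n:d(x_n,y_n)\le k\}\in\mathcal F$ for some $k\in\mathbb N$. Galaxies are the classes of this equivalence relation, together with the hyperbranches between their hypernodes. The principal galaxy $\Gamma_0$ contains the standard hypernodes. Closeness. For galaxies $\Gamma_a,\Gamma_b\ne\Gamma_0$, $\Gamma_a$ is closer to $\Gamma_0$ than is $\Gamma_b$ if there exist ${\bf y}=[y_n]\in\Gamma_a$, ${\bf z}=[z_n]\in\Gamma_b$ and ${\bf x}=[x_n]\in\Gamma_0$ such that for every $m\in\mathbb N$, $\{n: d(z_n,x_n)-d(y_n,x_n)\ge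 m\}\in\mathcal F$. *)

From Stdlib Require Import Arith List ZArith ClassicalEpsilon.

Set Implicit Arguments.

Section Graph.
Variables (X : Type) (adj : X -> X -> Prop).

Inductive walk : X -> X -> nat -> Prop :=
| walk0 x : walk x x 0
| walkS x y z n : adj x y -> walk y z n -> walk x z (S n).

Definition connected : Prop := forall x y : X, exists n, walk x y n.

(* graph distance: the least length of a walk from x to y
   (chosen by Hilbert epsilon; meaningful for connected graphs). *)
Definition dist (x y : X) : nat :=
  epsilon (inhabits 0%nat)
    (fun n => walk x y n /\ forall m, walk x y m -> (n <= m)%nat).

Definition infinite_nodes : Prop := forall l : list X, exists x, ~ In x l.
End Graph.

Definition free_ultrafilter (F : (nat -> Prop) -> Prop) : Prop :=
  F (fun _ => True) /\
  ~ F (fun _ => False) /\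
  (forall A B : nat -> Prop, F A -> (forall n, A n -> B n) -> F B) /\
  (forall A B : nat -> Prop, F A -> F B -> F (fun n => A n /\ B n)) /\
  (forall A : nat -> Prop, F A \/ F (fun n => ~ A n)) /\
  (forall k : nat, ~ F (fun n => n = k)).

Section Enlargement.
Variables (X : Type) (adj : X -> X -> Prop) (F : (nat -> Prop) -> Prop).

(* Hypernodes are represented by node sequences nat -> X. *)
Definition lim_distant (x y : nat -> X) : Prop :=
  exists k : nat, F (fun n => (dist adj (x n) (y n) <= k)%nat).

Definition in_principal (x : nat -> X) : Prop :=
  exists a : X, lim_distant x (fun _ => a).

Definition closer (a b : nat -> X) : Prop :=
  exists y z x : nat -> X,
    lim_distant y a /\ lim_distant z b /\ in_principal x /\
    forall m : nat,
      F (fun n => (Z.of_nat (dist adj (z n) (x n)) - Z.of_nat (dist adj (y n) (x n))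
                    >= Z.of_nat m)%Z).
End Enlargement.

From Stdlib Require Import ZArith Lia Classical ClassicalEpsilon Wf_nat.

(* Fix a base node a0 and a hypernode s outside the principal galaxy, so that
   r n := d(a0, s n) tends to infinity along F.  With p n := sqrt(r n) / 2 we
   have 4 p^2 <= r, so every level t_i := p (2p + i), |i| <= p, is attained by
   some node on a geodesic from a0 to s n.  The hypernodes g_i at level t_i
   have unlimited distance from a0 (hence lie outside Gamma_0), and
   t_j - t_i = (j - i) p is unlimited for i < j, which is the closeness
   relation, witnessed by y = g_i, z = g_j and x = a0. *)

Set Implicit Arguments.

Section GraphDistance.
Variables (X : Type) (adj : X -> X -> Prop).
Hypothesis adj_sym : forall x y, adj x y -> adj y x.
Hypothesis Hconn : connected adj.

Lemma walk_cat x y z m n :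
  walk adj x y m -> walk adj y z n -> walk adj x z (m + n).
Proof. induction 1; intros; simpl; [assumption | econstructor; eauto]. Qed.

Lemma walk_sym x y n : walk adj x y n -> walk adj y x n.
Proof.
  induction 1 as [| x y z n Hxy _ IH]; [constructor |].
  rewrite <- Nat.add_1_r. apply (walk_cat IH).
  econstructor; [apply adj_sym; exact Hxy | constructor].
Qed.

Lemma walk_split x z n : walk adj x z n -> forall t, t <= n ->
  exists v, walk adj x v t /\ walk adj v z (n - t).
Proof.
  induction 1 as [x | x y z n Hxy Hyz IH]; intros t Ht.
  - exists x. replace t with 0 by lia. split; constructor.
  - destruct t as [| t].
    + exists x. split; [constructor | simpl; econstructor; eauto].
    + destruct (IH t) as [v [Hxv Hvz]]; [lia |].
      exists v. split; [econstructor; eauto | exact Hvz].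
Qed.

Lemma dist_spec x y :
  walk adj x y (dist adj x y) /\ forall m, walk adj x y m -> dist adj x y <= m.
Proof.
  unfold dist. apply epsilon_spec.
  destruct (dec_inh_nat_subset_has_unique_least_element (walk adj x y))
    as [n [Hn _]]; [intro; apply classic | apply Hconn |].
  exists n. exact Hn.
Qed.

Lemma dist_sym x y : dist adj x y = dist adj y x.
Proof.
  destruct (dist_spec x y) as [Wxy Mxy], (dist_spec y x) as [Wyx Myx].
  apply Nat.le_antisymm; [apply Mxy | apply Myx]; apply walk_sym; assumption.
Qed.

Lemma dist_triangle x y z : dist adj x z <= dist adj x y + dist adj y z.
Proof.
  apply (proj2 (dist_spec x z)).
  exact (walk_cat (proj1 (dist_spec x y)) (proj1 (dist_spec y z))).
Qed.

Lemma dist_refl x : dist adj x x = 0.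
Proof. pose proof (proj2 (dist_spec x x) 0 (walk0 _ _)). lia. Qed.

(* The prefix of length t of a geodesic from a to s is itself a geodesic. *)
Lemma dist_attained a s t : t <= dist adj a s -> exists v, dist adj a v = t.
Proof.
  intros Ht. destruct (dist_spec a s) as [Was Mas].
  destruct (walk_split Was Ht) as [v [Wav Wvs]]. exists v.
  destruct (dist_spec a v) as [Wav' Mav].
  pose proof (Mav _ Wav). pose proof (Mas _ (walk_cat Wav' Wvs)). lia.
Qed.

Definition node_at_dist (a s : X) (t : nat) : X :=
  epsilon (inhabits a) (fun v => dist adj a v = Nat.min t (dist adj a s)).

Lemma dist_node_at_dist a s t :
  dist adj a (node_at_dist a s t) = Nat.min t (dist adj a s).
Proof.
  unfold node_at_dist. apply epsilon_spec.
  apply (dist_attained a s). apply Nat.le_min_r.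
Qed.

End GraphDistance.

Section Ultrafilter.
Variable F : (nat -> Prop) -> Prop.
Hypothesis HF : free_ultrafilter F.

Lemma filter_true : F (fun _ => True).
Proof. apply HF. Qed.

Lemma filter_weaken {A B : nat -> Prop} : F A -> (forall n, A n -> B n) -> F B.
Proof. apply HF. Qed.

Lemma filter_and {A B : nat -> Prop} : F A -> F B -> F (fun n => A n /\ B n).
Proof. apply HF. Qed.

Lemma filter_ultra (A : nat -> Prop) : F A \/ F (fun n => ~ A n).
Proof. apply HF. Qed.

Lemma filter_nonempty {A : nat -> Prop} : F A -> exists n, A n.
Proof.
  intros HA. apply NNPP. intros Hno. apply (proj1 (proj2 HF)).
  apply (filter_weaken HA). intros n Hn. apply Hno. exists n. exact Hn.
Qed.

End Ultrafilter.

Section Galaxies.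
Variables (X : Type) (adj : X -> X -> Prop) (F : (nat -> Prop) -> Prop).
Hypothesis adj_sym : forall x y, adj x y -> adj y x.
Hypothesis Hconn : connected adj.
Hypothesis HF : free_ultrafilter F.

Lemma lim_distant_refl (x : nat -> X) : lim_distant adj F x x.
Proof.
  exists 0. apply (filter_weaken HF (filter_true HF)).
  intros n _. rewrite (dist_refl Hconn). lia.
Qed.

Lemma not_principal_dist_unbounded (s : nat -> X) (a : X) :
  ~ in_principal adj F s -> forall K, F (fun n => K < dist adj a (s n)).
Proof.
  intros Hs K. destruct (filter_ultra HF (fun n => K < dist adj a (s n)))
    as [Hfar | Hnear]; [exact Hfar |].
  exfalso. apply Hs. exists a, K. apply (filter_weaken HF Hnear).
  intros n Hn. rewrite (dist_sym adj_sym Hconn). lia.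
Qed.

Lemma dist_unbounded_not_principal (x : nat -> X) (a : X) :
  (forall K, F (fun n => K <= dist adj a (x n))) -> ~ in_principal adj F x.
Proof.
  intros Hx [b [k Hk]].
  destruct (filter_nonempty HF (filter_and HF Hk (Hx (dist adj a b + k + 1))))
    as [n [Hnb Hfar]].
  pose proof (dist_triangle Hconn a b (x n)).
  rewrite (dist_sym adj_sym Hconn b) in *. lia.
Qed.

Lemma closer_of_dist_spread (a0 : X) (y z : nat -> X) :
  (forall m, F (fun n => dist adj a0 (y n) + m <= dist adj a0 (z n))) ->
  closer adj F y z.
Proof.
  intros Hspread. exists y, z, (fun _ => a0).
  split; [apply lim_distant_refl |]. split; [apply lim_distant_refl |].
  split; [exists a0; apply lim_distant_refl |].
  intros m. apply (filter_weaken HF (Hspread m)). intros n Hn.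
  rewrite !(dist_sym adj_sym Hconn _ a0). lia.
Qed.

End Galaxies.

Definition half_sqrt (r : nat) : nat := Nat.sqrt r / 2.

Lemma half_sqrt_square_le r : 4 * half_sqrt r * half_sqrt r <= r.
Proof.
  unfold half_sqrt. pose proof (proj1 (Nat.sqrt_spec r (Nat.le_0_l r))).
  pose proof (Nat.div_mod (Nat.sqrt r) 2).
  pose proof (Nat.mod_upper_bound (Nat.sqrt r) 2).
  set (q := Nat.sqrt r) in *. nia.
Qed.

Lemma le_half_sqrt K r : (2 * K + 1) * (2 * K + 1) <= r -> K <= half_sqrt r.
Proof.
  intros Hr. unfold half_sqrt.
  assert (2 * K + 1 <= Nat.sqrt r).
  { rewrite <- (Nat.sqrt_square (2 * K + 1)). apply Nat.sqrt_le_mono, Hr. }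
  pose proof (Nat.div_mod (Nat.sqrt r) 2).
  pose proof (Nat.mod_upper_bound (Nat.sqrt r) 2). lia.
Qed.

Section LadderOfGalaxies.
Variables (X : Type) (adj : X -> X -> Prop) (F : (nat -> Prop) -> Prop).
Hypothesis adj_sym : forall x y, adj x y -> adj y x.
Hypothesis Hconn : connected adj.
Hypothesis HF : free_ultrafilter F.
Variables (a0 : X) (s : nat -> X).
Hypothesis Hs : ~ in_principal adj F s.

Let scale (n : nat) : nat := half_sqrt (dist adj a0 (s n)).

Let level (i : Z) (n : nat) : Z := (Z.of_nat (scale n) * (2 * Z.of_nat (scale n) + i))%Z.

Definition galaxy_rung (i : Z) (n : nat) : X :=
  node_at_dist adj a0 (s n) (Z.to_nat (level i n)).

Lemma scale_unbounded K : F (fun n => K <= scale n).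
Proof.
  apply (filter_weaken HF
    (not_principal_dist_unbounded adj_sym Hconn HF a0 Hs ((2 * K + 1) * (2 * K + 1)))).
  intros n Hn. apply le_half_sqrt. lia.
Qed.

Lemma dist_galaxy_rung i n : (Z.abs i <= Z.of_nat (scale n))%Z ->
  Z.of_nat (dist adj a0 (galaxy_rung i n)) = level i n.
Proof.
  intros Hi. unfold galaxy_rung. rewrite (dist_node_at_dist Hconn).
  pose proof (half_sqrt_square_le (dist adj a0 (s n))). fold (scale n) in *.
  unfold level in *. rewrite Nat.min_l; [rewrite Z2Nat.id |]; nia.
Qed.

Lemma galaxy_rung_not_principal i : ~ in_principal adj F (galaxy_rung i).
Proof.
  apply (dist_unbounded_not_principal adj_sym Hconn HF) with (a := a0). intros K.
  apply (filter_weaken HF (scale_unbounded (Z.to_nat (Z.abs i) + K))).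
  intros n Hn. pose proof (dist_galaxy_rung i n ltac:(lia)).
  unfold level in *. nia.
Qed.

Lemma galaxy_rung_closer i j : (i < j)%Z -> closer adj F (galaxy_rung i) (galaxy_rung j).
Proof.
  intros Hij. apply (closer_of_dist_spread adj_sym Hconn HF a0). intros m.
  apply (filter_weaken HF (scale_unbounded (Z.to_nat (Z.abs i) + Z.to_nat (Z.abs j) + m))).
  intros n Hn.
  pose proof (dist_galaxy_rung i n ltac:(lia)).
  pose proof (dist_galaxy_rung j n ltac:(lia)).
  unfold level in *. nia.
Qed.

End LadderOfGalaxies.

Theorem theorem4p2 (X : Type) (adj : X -> X -> Prop)
  (adj_sym : forall x y, adj x y -> adj y x)
  (adj_irr : forall x, ~ adj x x)
  (F : (nat -> Prop) -> Prop) (HF : free_ultrafilter F)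
  (Hconn : connected adj) (Hinf : infinite_nodes X)
  (Hout : exists s : nat -> X, ~ in_principal adj F s) :
  exists g : Z -> (nat -> X),
    (forall i : Z, ~ in_principal adj F (g i)) /\
    (forall i j : Z, (i < j)%Z -> closer adj F (g i) (g j)).
Proof.
  destruct Hout as [s Hs].
  exists (galaxy_rung adj (s 0) s). split.
  - intros i. apply galaxy_rung_not_principal; assumption.
  - intros i j. apply galaxy_rung_closer; assumption.
Qed.
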